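(* Let $\lambda_a,\lambda_b\in\{1,2\}$ and let $u,t,v,w$ be integers such that: $u,t,vw$ are, in that order, three consecutive terms of $\langle u,t\rangle_{S_{\lambda_a,\lambda_b}}=\langle t,vw\rangle_{S_{3-\lambda_b,\lambda_a}}$, i.e. $(u,t)$ satisfies $S_{\lambda_a,\lambda_b}$ and $u\cdot vw=t^3+t^{\lambda_a}+1$; $v,t,uw$ are, in that order, three consecutive terms of a second 4-chain $\langle v,t\rangle_{S_{\lambda_a,\lambda_b}}=\langle t,uw\rangle_{S_{3-\lambda_b,\lambda_a}}$, i.e. $(v,t)$ satisfies $S_{\lambda_a,\lambda_b}$; $|t|$ is a prime; and $t\nmid(u-v)$. Then $(-w,t)$ satisfies $S_{\lambda_a,\lambda_b}$, so $-w,t,-uv$ are, in that order, three consecutive terms of a third 4-chain $\langle -w,t\rangle_{S_{\lambda_a,\lambda_b}}=\langle t,-uv\rangle_{S_{3-\lambda_b,\lambda_a}}$.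
   Context: For $\lambda_a,\lambda_b\in\{1,2\}$, a pair of integers $(x,y)$ satisfies the system $S_{\lambda_a,\lambda_b}$ if $x\mid y^3+y^{\lambda_a}+1$ and $y\mid x^3+x^{\lambda_b}+1$. For such a pair, $\langle x,y\rangle_{S_{\lambda_a,\lambda_b}}$ denotes the bi-infinite integer sequence $(u_n)$ with $u_0=x$, $u_1=y$ and $u_{n-1}u_{n+1}=u_n^3+u_n^{e_n}+1$ for all $n$, where $e_n$ has period 4 with $(e_0,e_1,e_2,e_3)=(\lambda_b,\lambda_a,3-\lambda_b,3-\lambda_a)$; sequences are identified up to shift and reversal of indices. ''$u,t,s$, in that order, are three consecutive terms of $\langle u,t\rangle_{S_{\lambda_a,\lambda_b}}$'' means $(u,t)$ satisfies $S_{\lambda_a,\lambda_b}$ and $us=t^3+t^{\lambda_a}+1$; in that case $(t,s)$ satisfies $S_{3-\lambda_b,\lambda_a}$ and the same chain is denoted $\langle t,s\rangle_{S_{3-\lambda_b,\lambda_a}}$. *)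

From Stdlib Require Import ZArith Znumtheory.
Open Scope Z_scope.

Definition satS (la lb x y : Z) : Prop :=
  (x | y ^ 3 + y ^ la + 1) /\ (y | x ^ 3 + x ^ lb + 1).

Definition consec3 (la lb u t s : Z) : Prop :=
  satS la lb u t /\ u * s = t ^ 3 + t ^ la + 1.

From Stdlib Require Import ZArith Znumtheory Lia.
Open Scope Z_scope.

(* Modulo the prime |t|, u and v are distinct roots of the cubic
   f(x) = x^3 + x^lb + 1, since t divides f(u) and f(v).  A monic
   cubic with two distinct roots u, v modulo a prime splits as
   (x - u)(x - v)(x - r), where r = -(b + u + v) for b the coefficient of
   x^2, and Vieta gives u v r = -1.
   Since u (v w) = t^3 + t^la + 1 = 1 mod t, also u v w = 1, so -w = r is the
   third root: t divides f(-w), which is the missing half of S for (-w, t). *)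

Lemma prime_abs_divide_mul (t a b : Z) :
  prime (Z.abs t) -> (t | a * b) -> (t | a) \/ (t | b).
Proof.
  intros Hp Hab; apply Z.divide_abs_l in Hab.
  destruct (prime_mult _ Hp a b Hab) as [H | H];
    [left | right]; apply Z.divide_abs_l; exact H.
Qed.

Lemma prime_abs_not_divide_1 (t : Z) : prime (Z.abs t) -> ~ (t | 1).
Proof.
  intros Hp H; apply prime_ge_2 in Hp; apply Z.divide_1_r in H; lia.
Qed.

Definition cubic (b c d x : Z) : Z := x ^ 3 + b * x ^ 2 + c * x + d.

Section CubicModPrime.

Variables (b c d t : Z).
Hypothesis t_prime : prime (Z.abs t).

Definition vieta_gap (u v : Z) : Z := u ^ 2 + u * v + v ^ 2 + b * (u + v) + c.

Lemma cubic_sub (x y : Z) : cubic b c d x - cubic b c d y = (x - y) * vieta_gap x y.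
Proof. unfold cubic, vieta_gap; ring. Qed.

(* Division of the cubic by (x - u)(x - v)(x + b + u + v): the remainder is
   linear, with both coefficients vanishing mod t once u, v are distinct roots. *)
Lemma cubic_split (u v x : Z) :
  cubic b c d x = (x - u) * (x - v) * (x + b + u + v)
                  + vieta_gap u v * x + (d - u * v * (b + u + v)).
Proof. unfold cubic, vieta_gap; ring. Qed.

Lemma cubic_vieta (u v : Z) :
  (t | cubic b c d u) -> (t | cubic b c d v) -> ~ (t | u - v) ->
  (t | vieta_gap u v) /\ (t | d - u * v * (b + u + v)).
Proof.
  intros Hu Hv Huv.
  assert (Hgap : (t | vieta_gap u v)).
  { assert (H : (t | (u - v) * vieta_gap u v))
      by (rewrite <- cubic_sub; apply Z.divide_sub_r; assumption).
    destruct (prime_abs_divide_mul _ _ _ t_prime H); tauto. }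
  split; [exact Hgap |].
  replace (d - u * v * (b + u + v))
    with (cubic b c d u - vieta_gap u v * u) by (rewrite (cubic_split u v u); ring).
  apply Z.divide_sub_r; [exact Hu | apply Z.divide_mul_l; exact Hgap].
Qed.

Lemma cubic_third_root (u v x : Z) :
  (t | cubic b c d u) -> (t | cubic b c d v) -> ~ (t | u - v) ->
  (t | x + b + u + v) -> (t | cubic b c d x).
Proof.
  intros Hu Hv Huv Hx.
  destruct (cubic_vieta u v Hu Hv Huv) as [Hgap Hconst].
  rewrite (cubic_split u v x).
  apply Z.divide_add_r; [apply Z.divide_add_r |].
  - apply Z.divide_mul_r; exact Hx.
  - apply Z.divide_mul_l; exact Hgap.
  - exact Hconst.
Qed.

End CubicModPrime.

Lemma chain_poly_cubic (l : Z) : l = 1 \/ l = 2 ->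
  exists b c, forall y, y ^ 3 + y ^ l + 1 = cubic b c 1 y.
Proof.
  intros [-> | ->]; [exists 0, 1 | exists 1, 0]; intros y; unfold cubic; ring.
Qed.

Lemma divide_pow3_add_pow (t l : Z) : l = 1 \/ l = 2 -> (t | t ^ 3 + t ^ l).
Proof.
  intros [-> | ->]; [exists (t ^ 2 + 1) | exists (t ^ 2 + t)]; ring.
Qed.

Theorem mainTheorem16 (la lb u t v w : Z) :
  (la = 1 \/ la = 2) -> (lb = 1 \/ lb = 2) ->
  consec3 la lb u t (v * w) ->
  consec3 la lb v t (u * w) ->
  prime (Z.abs t) ->
  ~ (t | u - v) ->
  satS la lb (- w) t /\ consec3 la lb (- w) t (- (u * v)).
Proof.
  intros Hla Hlb [[_ Hu] E] [[_ Hv] _] Hp Huv.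
  assert (Huvw : (t | u * v * w - 1)).
  { replace (u * v * w - 1) with (t ^ 3 + t ^ la) by (rewrite <- Z.mul_assoc, E; ring).
    apply divide_pow3_add_pow; exact Hla. }
  destruct (chain_poly_cubic lb Hlb) as (b & c & Hf).
  rewrite Hf in Hu, Hv.
  destruct (cubic_vieta b c 1 t Hp u v Hu Hv Huv) as [_ Hr].
  assert (Hw : (t | - w + b + u + v)).
  { assert (H : (t | u * v * (w - (b + u + v)))).
    { replace (u * v * (w - (b + u + v)))
        with ((u * v * w - 1) + (1 - u * v * (b + u + v))) by ring.
      apply Z.divide_add_r; assumption. }
    destruct (prime_abs_divide_mul _ _ _ Hp H) as [Htuv | Hdiff].
    - exfalso; apply (prime_abs_not_divide_1 t Hp).
      replace 1 with ((1 - u * v * (b + u + v)) + u * v * (b + u + v)) by ring.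
      apply Z.divide_add_r; [exact Hr | apply Z.divide_mul_l; exact Htuv].
    - replace (- w + b + u + v) with (- (w - (b + u + v))) by ring.
      apply Z.divide_opp_r; exact Hdiff. }
  assert (Hsat : satS la lb (- w) t).
  { split; [exists (- (u * v)); rewrite <- E; ring |].
    rewrite Hf; exact (cubic_third_root b c 1 t Hp u v (- w) Hu Hv Huv Hw). }
  split; [exact Hsat | split; [exact Hsat | rewrite <- E; ring]].
Qed.
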